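(* Let $x\in\mathcal{X}^+$ be a positive excursion. Then the set $\{x'\in\mathcal{X}^+:N(x')=N(x)\}$ equals the set of all excursions $x^r$, $r\ge1$, obtained as $x^r=\mathcal{E}_r\circ\cdots\circ\mathcal{E}_1(x)$ where each $\mathcal{E}_k$ is a shift of an excursion defined at $\mathcal{E}_{k-1}\circ\cdots\circ\mathcal{E}_1(x)$ (i.e. $x^0=x$ and $x^k=\mathcal{E}_k(x^{k-1})$ with $x^{k-1}$ in the domain of $\mathcal{E}_k$).
   Context: A positive excursion is a finite sequence $x=(x_n:0\le n\le\theta)$ of integers with $x_0=x_\theta=0$, $x_n>0$ for $0<n<\theta$, and jumps $y_n=x_{n+1}-x_n\in\{1,-1\}$; $\theta=\theta(x)$ is its length, $H(x)=\max_n x_n$ its height, and $\mathcal{X}^+$ is the set of positive excursions. The level numbers of $x$ are $N(x)=(N_h(x):h\ge0)$ with $N_h(x)=|\{n\in[0,\theta):y_n=1,\ x_n=h\}|$. Shift of an excursion: given integers $a<b$, $c$ and $h\ge1$, the shift $\mathcal{E}=\mathcal{E}\{a,b,c;h\}$ is defined at $x\in\mathcal{X}^+$ when $0\le a,b,c\le\theta(x)$, $h\le H(x)-1$, $x_a=x_b=x_c=h$, $x_n>h$ for all $a<n<b$ (so $x[a,b]$ shifted by $-h$ is a positive excursion), and $c\notin(a,b)$. Then $\mathcal{E}(x)$ is the path of the same length obtained by moving the segment $x[a,b]$ to position $c$: if $b\le c$: $\mathcal{E}(x)_n=x_n$ for $n<a$ or $n\ge c$; $\mathcal{E}(x)_{a+k}=x_{b+k}$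 for $0\le k\le c-b$; $\mathcal{E}(x)_{c-(b-a)+k}=x_{a+k}$ for $0\le k<b-a$. If $c\le a$: $\mathcal{E}(x)_n=x_n$ for $n\le c$ or $n>b$; $\mathcal{E}(x)_{c+k}=x_{a+k}$ for $0< k\le b-a$; $\mathcal{E}(x)_{c+(b-a)+k}=x_{c+k}$ for $0\le k\le a-c$. (That is, the two adjacent path segments $x[a,b],x[b,c]$, respectively $x[c,a],x[a,b]$, all with endpoints at level $h$, are interchanged.) $\mathcal{E}(x)$ is again a positive excursion. *)

From mathcomp Require Import all_boot all_order all_algebra.
Set Implicit Arguments. Unset Strict Implicit. Unset Printing Implicit Defensive.
Import Order.TTheory GRing.Theory Num.Theory.
Local Open Scope ring_scope.

(* A path x = (x_0, ..., x_theta) is represented by the sequence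
   [:: x_0; ...; x_theta] of integers (so size x = theta + 1). *)
Definition lpath := seq int.

Definition theta (x : lpath) : nat := (size x).-1.
Definition xv (x : lpath) (n : nat) : int := nth 0 x n.

Definition pos_exc (x : lpath) : Prop :=
  [/\ (0 < size x)%N, xv x 0 = 0, xv x (theta x) = 0,
      (forall n : nat, (0 < n < theta x)%N -> 0 < xv x n) &
      (forall n : nat, (n < theta x)%N ->
         xv x n.+1 - xv x n = 1 \/ xv x n.+1 - xv x n = -1)].

(* height H(x) = max_n x_n (x_0 = 0, so starting the fold at 0 is harmless) *)
Definition height (x : lpath) : int := foldr Num.max 0 x.

Definition level_number (x : lpath) (h : nat) : nat :=
  count (fun n => (xv x n.+1 - xv x n == 1) && (xv x n == h%:Z)) (iota 0 (theta x)).

Definition shift_defined (a b c : nat) (h : int) (x : lpath) : Prop :=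
  [/\ [/\ (a < b)%N, (b <= theta x)%N & (c <= theta x)%N],
      1 <= h /\ h <= height x - 1,
      [/\ xv x a = h, xv x b = h & xv x c = h],
      (forall n : nat, (a < n < b)%N -> h < xv x n) &
      ~~ (a < c < b)%N].

Definition shift (a b c : nat) (x : lpath) : lpath :=
  mkseq (fun n =>
    if (b <= c)%N then
      if (n < a)%N || (c <= n)%N then xv x n
      else if (n <= a + (c - b))%N then xv x (b + (n - a))
      else xv x (a + (n - (c - (b - a))))
    else
      if (n <= c)%N || (b < n)%N then xv x n
      else if (n <= c + (b - a))%N then xv x (a + (n - c))
      else xv x (c + (n - (c + (b - a)))))
    (size x).

Definition shift_step (x y : lpath) : Prop :=
  exists a b c : nat, exists h : int,
    shift_defined a b c h x /\ y = shift a b c x.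

Definition shift_reachable (x y : lpath) : Prop :=
  exists r : nat, exists X : nat -> lpath,
    [/\ X 0%N = x, X r = y &
        forall k : nat, (0 < k <= r)%N -> shift_step (X k.-1) (X k)].

(* A shift only permutes the steps (x_n, x_{n+1}) of an excursion, so it preserves
   positivity and the level numbers.  Conversely, let x' have the level numbers of x
   and let x agree with x' up to time n, at level h.  If x steps down at n while x'
   steps up, counting up-steps at level h after n shows that x has a later up-step
   from h, and the excursion above h it starts can be shifted to time n.  If x steps
   up while x' steps down, the excursion of x above h starting at n is moved behind a
   later up-step of x from h-1 to h (one exists by counting up-steps at level h-1,
   since x' climbs back from h-1 to h); this brings the first descent of x below h
   closer to n, so after finitely many shifts x agrees with x' up to time n+1. *)

From mathcomp Require Import all_boot all_order all_algebra zify.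
Import Order.TTheory GRing.Theory Num.Theory.
Set Implicit Arguments. Unset Strict Implicit. Unset Printing Implicit Defensive.

Definition unit_steps (x : lpath) (i k : nat) : Prop :=
  forall n, (i <= n < k)%N -> xv x n.+1 = (xv x n + 1)%R \/ xv x n.+1 = (xv x n - 1)%R.

Lemma pos_exc_step x n : pos_exc x -> (n < theta x)%N ->
  xv x n.+1 = (xv x n + 1)%R \/ xv x n.+1 = (xv x n - 1)%R.
Proof. by case=> _ _ _ _ step /step; lia. Qed.

Lemma pos_exc_unit_steps x i k : pos_exc x -> (k <= theta x)%N -> unit_steps x i k.
Proof. by move=> ex le_k n /andP[_ lt_n]; apply: (pos_exc_step ex); lia. Qed.

Lemma size_pos_exc x : pos_exc x -> size x = (theta x).+1.
Proof. by case; rewrite /theta; case: x. Qed.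

Lemma xv_default x i : (theta x < i)%N -> xv x i = 0%R.
Proof. by move=> lt_ti; rewrite /xv nth_default //; apply: leq_trans (leqSpred _) lt_ti. Qed.

Lemma xv_ge0 x i : pos_exc x -> (0 <= xv x i)%R.
Proof.
case=> _ x0 xt xpos _; case: (posnP i) => [-> | i_gt0]; first by rewrite x0.
case: (ltnP i (theta x)) => [lt_it | le_ti]; first by have := xpos i; lia.
case: (leqP i (theta x)) => [le_it | lt_ti]; first by rewrite (_ : i = theta x) ?xt; lia.
by rewrite xv_default.
Qed.

Lemma pos_exc_xv1 x : pos_exc x -> (0 < theta x)%N -> xv x 1 = 1%R.
Proof.
move=> ex t_gt0; have := pos_exc_unit_steps (i := 0) ex (leqnn _).
case: ex => _ x0 xt xpos _ /(_ 0%N t_gt0); rewrite x0.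
case: (ltnP 1 (theta x)) => [lt_1t | le_t1]; first by have := xpos 1%N; lia.
by move: xt; rewrite (_ : theta x = 1%N); lia.
Qed.

Lemma xv_le_height x i : (xv x i <= height x)%R.
Proof.
rewrite /xv /height; elim: x i => [|v x IH] [|i] //=; rewrite le_max ?lexx //.
by rewrite IH orbT.
Qed.

Lemma first_switch (P : pred nat) i k : (i <= k)%N -> ~~ P i -> P k ->
  exists j, [/\ (i <= j < k)%N, P j.+1 & forall l, (i <= l <= j)%N -> ~~ P l].
Proof.
move=> le_ik NPi Pk; have lt_ik : (i < k)%N.
  by rewrite ltn_neqAle le_ik andbT; apply: contraNneq NPi => ->.
have exP : exists m, (i <= m)%N && P m.+1 by exists k.-1; rewrite prednK //; lia.
case: (ex_minnP exP) => j /andP[le_ij Pj1] min_j; exists j; split => //.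
- by rewrite le_ij /=; have := min_j k.-1; rewrite prednK //; lia.
- case=> [|l] /andP[le_il le_lj]; first by move: NPi; rewrite (_ : i = 0%N) //; lia.
  case: (ltnP l i) => [lt_li | le_li]; first by move: NPi; rewrite (_ : i = l.+1) //; lia.
  by apply/negP => Pl1; have := min_j l; rewrite le_li Pl1; lia.
Qed.

Lemma first_crossing_down x (v : int) i k : unit_steps x i k -> (i <= k)%N ->
  (v <= xv x i)%R -> (xv x k < v)%R ->
  exists j, [/\ (i <= j < k)%N, xv x j = v, xv x j.+1 = (v - 1)%R &
    forall l, (i <= l <= j)%N -> (v <= xv x l)%R].
Proof.
move=> step le_ik le_vi lt_kv; have NPi : ~~ (xv x i < v)%R by rewrite -leNgt.
have [j [ijk lt_j1 above]] :=
  first_switch (P := fun l => (xv x l < v)%R) le_ik NPi lt_kv.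
have le_vj : (v <= xv x j)%R by rewrite leNgt above // leqnn andbT; case/andP: ijk.
exists j; split => //; try by case: (step j ijk); lia.
by move=> l /above; rewrite -leNgt.
Qed.

Lemma pos_exc_crossing_down x (v : int) i : pos_exc x -> (i <= theta x)%N ->
  (0 < v)%R -> xv x i = v ->
  exists j, [/\ (i <= j < theta x)%N, xv x j = v, xv x j.+1 = (v - 1)%R &
    forall l, (i <= l <= j)%N -> (v <= xv x l)%R].
Proof.
move=> ex le_it v_gt0 xi; have [_ _ xt _ _] := ex.
apply: first_crossing_down (pos_exc_unit_steps ex (leqnn _)) le_it _ _; first by rewrite xi.
by rewrite xt.
Qed.

Lemma crossing_up x (v : int) i k : unit_steps x i k -> (i <= k)%N ->
  (xv x i < v)%R -> (v <= xv x k)%R ->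
  exists j, [/\ (i <= j < k)%N, xv x j = (v - 1)%R & xv x j.+1 = v].
Proof.
move=> step le_ik lt_iv le_vk; have NPi : ~~ (v <= xv x i)%R by rewrite -ltNge.
have [j [ijk le_vj1 below]] :=
  first_switch (P := fun l => (v <= xv x l)%R) le_ik NPi le_vk.
have lt_jv : (xv x j < v)%R by rewrite ltNge below // leqnn andbT; case/andP: ijk.
by exists j; split => //; case: (step j ijk); lia.
Qed.

(* [shift_index a b c n] is the step of [x] that becomes step [n] of [shift a b c x]. *)
Definition shift_index (a b c n : nat) : nat :=
  if (b <= c)%N then
    if (n < a)%N then n else if (n < a + (c - b))%N then b + (n - a)
    else if (n < c)%N then a + (n - (a + (c - b))) else n
  else
    if (n < c)%N then n else if (n < c + (b - a))%N then a + (n - c)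
    else if (n < b)%N then c + (n - (c + (b - a))) else n.

Lemma shift_index_lt a b c t n : (a < b)%N -> (b <= t)%N -> (c <= t)%N ->
  (n < t)%N -> (shift_index a b c n < t)%N.
Proof. by move=> *; rewrite /shift_index; case: (leqP b c) => ?; repeat case: ifP => ?; lia. Qed.

Lemma shift_index_gt0 a b c n : (0 < a < b)%N -> (0 < c)%N -> (0 < n)%N ->
  (0 < shift_index a b c n)%N.
Proof. by move=> *; rewrite /shift_index; case: (leqP b c) => ?; repeat case: ifP => ?; lia. Qed.

Lemma shift_index_perm a b c t : (a < b)%N -> (b <= t)%N -> (c <= t)%N ->
  ~~ (a < c < b)%N -> perm_eq (map (shift_index a b c) (iota 0 t)) (iota 0 t).
Proof.
move=> lt_ab le_bt le_ct c_out.
have uniq_map : uniq (map (shift_index a b c) (iota 0 t)).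
  rewrite map_inj_in_uniq ?iota_uniq // => i j; rewrite !mem_iota /shift_index.
  by case: leqP => ? ? ?; repeat case: ifP => ?; lia.
have sub_iota : {subset map (shift_index a b c) (iota 0 t) <= iota 0 t}.
  move=> y /mapP[i]; rewrite !mem_iota /= => lt_it ->.
  exact: shift_index_lt.
have [_ eq_mem] := uniq_min_size uniq_map sub_iota (eq_leq (esym (size_map _ _))).
by apply: uniq_perm; rewrite ?iota_uniq.
Qed.

Ltac solve_xv_shift x n :=
  let le_size := fresh in
  rewrite /xv /shift; case: (ltnP n (size x)) => [? | le_size];
  [ rewrite nth_mkseq // -!/(xv _ _); repeat case: ifP => ?; first [done | lia]
  | rewrite !nth_default //; rewrite ?size_mkseq; apply: (leq_trans le_size); lia ].

Lemma xv_shift_prefix a b c x n : (n < a)%N -> (n <= c)%N ->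
  xv (shift a b c x) n = xv x n.
Proof. by move=> *; solve_xv_shift x n. Qed.

Lemma xv_shift_suffix a b c x n : (b < n)%N -> (c <= n)%N ->
  xv (shift a b c x) n = xv x n.
Proof. by move=> *; solve_xv_shift x n. Qed.

Lemma xv_shift_forward a b c x n : (a < b)%N -> (b <= c)%N -> (a <= n <= a + (c - b))%N ->
  xv (shift a b c x) n = xv x (b + (n - a)).
Proof. by move=> *; solve_xv_shift x n. Qed.

Lemma xv_shift_backward a b c x n : (c <= a < b)%N -> (c < n <= c + (b - a))%N ->
  xv (shift a b c x) n = xv x (a + (n - c)).
Proof. by move=> *; solve_xv_shift x n. Qed.

Lemma xv_shift_index a b c x n : (a < b)%N -> ~~ (a < c < b)%N ->
  xv x a = xv x b -> xv x c = xv x b -> (n < theta x)%N ->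
  xv (shift a b c x) n = xv x (shift_index a b c n) /\
  xv (shift a b c x) n.+1 = xv x (shift_index a b c n).+1.
Proof.
move=> lt_ab c_out x_ab x_cb lt_nt.
have x_abc i j : i = a \/ i = b \/ i = c -> j = a \/ j = b \/ j = c ->
    xv x i = xv x j.
  by move=> [->|[->|->]] [->|[->|->]]; rewrite ?x_ab ?x_cb.
rewrite /xv /shift !nth_mkseq; try by move: lt_nt; rewrite /theta; lia.
rewrite -!/(xv x _) /shift_index.
by case: leqP => ?; split; repeat case: ifP => ?;
  first [congr (xv x _); lia | apply: x_abc; lia].
Qed.

Lemma theta_shift a b c x : theta (shift a b c x) = theta x.
Proof. by rewrite /theta size_mkseq. Qed.

Lemma pos_exc_support x i : pos_exc x -> (0 < xv x i)%R -> (0 < i < theta x)%N.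
Proof.
case=> _ x0 xt _ _ xi_gt0; case: (posnP i) => [i0 | i_gt0].
  by move: xi_gt0; rewrite i0 x0.
case: (ltngtP i (theta x)) => [lt_it | lt_ti | eq_it] //.
  by move: xi_gt0; rewrite xv_default.
by move: xi_gt0; rewrite eq_it xt.
Qed.

Definition up_step (x : lpath) (h n : nat) : bool :=
  ((xv x n.+1 - xv x n == 1) && (xv x n == h%:Z))%R.

Lemma up_stepP x h n :
  reflect (xv x n = h%:Z /\ xv x n.+1 = h%:Z + 1)%R (up_step x h n).
Proof. by apply: (iffP andP) => [[/eqP ? /eqP ?] | [? ?]]; split; try apply/eqP; lia. Qed.

Lemma level_numberE x h : level_number x h = count (up_step x h) (iota 0 (theta x)).
Proof. by []. Qed.

Lemma level_number_shift a b c h x k : shift_defined a b c h x ->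
  level_number (shift a b c x) k = level_number x k.
Proof.
case=> [[lt_ab le_bt le_ct] _ [xa xb xc] _ c_out].
have shift_steps := xv_shift_index lt_ab c_out (etrans xa (esym xb)) (etrans xc (esym xb)).
rewrite !level_numberE theta_shift.
rewrite (@eq_in_count _ _ (up_step x k \o shift_index a b c)); last first.
  by move=> n; rewrite mem_iota => /shift_steps[e1 e2]; rewrite /up_step e1 e2.
by rewrite -count_map; apply/permP/shift_index_perm.
Qed.

Lemma pos_exc_shift a b c h x : pos_exc x -> shift_defined a b c h x ->
  pos_exc (shift a b c x).
Proof.
move=> ex [[lt_ab le_bt le_ct] [h_ge1 _] [xa xb xc] _ c_out].
have shift_steps := xv_shift_index lt_ab c_out (etrans xa (esym xb)) (etrans xc (esym xb)).
have /andP[a_gt0 _] : (0 < a < theta x)%N by apply: (pos_exc_support ex); rewrite xa; lia.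
have /andP[_ lt_bt] : (0 < b < theta x)%N by apply: (pos_exc_support ex); rewrite xb; lia.
have /andP[c_gt0 _] : (0 < c < theta x)%N by apply: (pos_exc_support ex); rewrite xc; lia.
case: ex => size_gt0 x0 xt xpos xstep; split; rewrite ?theta_shift.
- by rewrite size_mkseq.
- by rewrite xv_shift_prefix.
- by rewrite xv_shift_suffix.
- move=> n /andP[n_gt0 lt_nt]; have [-> _] := shift_steps n lt_nt.
  by apply: xpos; rewrite shift_index_gt0 ?a_gt0 ?shift_index_lt.
- move=> n lt_nt; have [-> ->] := shift_steps n lt_nt.
  by apply: xstep; rewrite shift_index_lt.
Qed.

Definition same_levels (x y : lpath) : Prop :=
  forall h : nat, level_number x h = level_number y h.

Lemma shift_step_inv x y : pos_exc x -> shift_step x y ->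
  [/\ pos_exc y, theta y = theta x & same_levels y x].
Proof.
move=> ex [a [b [c [h [def ->]]]]]; split; first exact: pos_exc_shift def.
  exact: theta_shift.
by move=> k; apply: level_number_shift def.
Qed.

Lemma shift_reachable_refl x : shift_reachable x x.
Proof. by exists 0%N, (fun=> x); split => // k; rewrite ltnNge andNb. Qed.

Lemma shift_step_reachable x y : shift_step x y -> shift_reachable x y.
Proof. by move=> st; exists 1%N, (fun k => if k is 0 then x else y); split => // [[|[|k]]]. Qed.

Lemma shift_reachable_trans x y z :
  shift_reachable x y -> shift_reachable y z -> shift_reachable x z.
Proof.
case=> r [X [X0 Xr stepX]] [s [Y [Y0 Ys stepY]]].
exists (r + s)%N, (fun k => if (k <= r)%N then X k else Y (k - r)); split => //.
  case: ifP => [le_rs_r | _]; last by rewrite addKn.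
  have s0 : s = 0%N by lia.
  by move: Ys; rewrite s0 addn0 Xr Y0.
move=> k /andP[k_gt0 le_k]; case: (leqP k r) => [le_kr | lt_rk].
  by rewrite (leq_trans (leq_pred k) le_kr); apply: stepX; rewrite k_gt0.
have -> : (if (k.-1 <= r)%N then X k.-1 else Y (k.-1 - r)) = Y (k - r).-1.
  case: ifP => [le_k1r | _]; last by congr Y; lia.
  by rewrite (_ : k.-1 = r) ?Xr -?Y0; [congr Y | ]; lia.
by apply: stepY; lia.
Qed.

Lemma shift_reachable_inv x y : pos_exc x -> shift_reachable x y ->
  [/\ pos_exc y, theta y = theta x & same_levels y x].
Proof.
move=> ex [r [X [X0 <- stepX]]].
suff inv k : (k <= r)%N -> [/\ pos_exc (X k), theta (X k) = theta x & same_levels (X k) x].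
  exact: inv.
elim: k => [|k IHk] le_kr; first by rewrite X0; split=> // h.
have [exk thk levk] := IHk (ltnW le_kr).
have [exk1 thk1 levk1] := shift_step_inv exk (stepX k.+1 le_kr).
by split=> // [|h]; [rewrite thk1 thk | rewrite levk1 levk].
Qed.

Definition agree_upto (n : nat) (x y : lpath) : Prop :=
  forall i, (i <= n)%N -> xv x i = xv y i.

Lemma agree_upto_sym n x y : agree_upto n x y -> agree_upto n y x.
Proof. by move=> agr i /agr. Qed.

Lemma agree_upto_le m n x y : (m <= n)%N -> agree_upto n x y -> agree_upto m x y.
Proof. by move=> le_mn agr i le_im; apply: agr (leq_trans le_im le_mn). Qed.

Lemma agree_uptoS n x y : agree_upto n x y -> xv x n.+1 = xv y n.+1 -> agree_upto n.+1 x y.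
Proof. by move=> agr eq_n1 i; rewrite leq_eqVlt ltnS => /orP[/eqP -> | /agr]. Qed.

Lemma up_step_after x y h n m : (n <= theta x)%N -> (n <= theta y)%N -> agree_upto n x y ->
  level_number x h = level_number y h -> (n <= m)%N -> (m < theta y)%N -> up_step y h m ->
  exists2 m', (n <= m' < theta x)%N & up_step x h m'.
Proof.
move=> le_nx le_ny agr levh le_nm lt_my up_m.
have level_split z : (n <= theta z)%N -> level_number z h =
    (count (up_step z h) (iota 0 n) + count (up_step z h) (iota n (theta z - n)))%N.
  by move=> le_nz; rewrite level_numberE -count_cat -iotaD subnKC.
have same_prefix : count (up_step x h) (iota 0 n) = count (up_step y h) (iota 0 n).
  by apply: eq_in_count => i; rewrite mem_iota /up_step => /andP[_ lt_in]; rewrite !agr //; lia.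
move: levh; rewrite (level_split x) // (level_split y) // same_prefix => /addnI eq_suffix.
have : has (up_step y h) (iota n (theta y - n)).
  by apply/hasP; exists m; rewrite // mem_iota; lia.
rewrite has_count -eq_suffix -has_count => /hasP[m']; rewrite mem_iota => ? ?.
by exists m' => //; lia.
Qed.

Lemma theta_le_of_agree x y : pos_exc x -> pos_exc y ->
  level_number x 0 = level_number y 0 -> agree_upto (theta x) x y -> (theta y <= theta x)%N.
Proof.
move=> ex ey lev0 agr; rewrite leqNgt; apply/negP => lt_xy.
have [_ y0 _ ypos _] := ey.
case: (posnP (theta x)) => [tx0 | tx_gt0].
  have : (0 < level_number y 0)%N.
    rewrite level_numberE -has_count; apply/hasP; exists 0%N; first by rewrite mem_iota; lia.
    by apply/up_stepP; rewrite y0 (pos_exc_xv1 ey) //; lia.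
  by rewrite -lev0 level_numberE tx0.
have [_ _ xt _ _] := ex; have := ypos (theta x); rewrite -agr // xt; lia.
Qed.

Lemma agree_upto_eq x y n : pos_exc x -> pos_exc y -> same_levels x y ->
  agree_upto n x y -> (theta x <= n)%N -> x = y.
Proof.
move=> ex ey lev agr le_xn.
have le_yx := theta_le_of_agree ex ey (lev 0%N) (agree_upto_le le_xn agr).
have le_xy := theta_le_of_agree ey ex (esym (lev 0%N))
  (agree_upto_sym (agree_upto_le (leq_trans le_yx le_xn) agr)).
apply: (@eq_from_nth _ 0%R); first by rewrite (size_pos_exc ex) (size_pos_exc ey); lia.
by move=> i; rewrite (size_pos_exc ex) => lt_i; apply: agr; lia.
Qed.

Section AgreementStep.

Variables (x x' : lpath) (n h : nat).
Hypotheses (ex : pos_exc x) (ex' : pos_exc x') (lev : same_levels x x')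
  (agr : agree_upto n x x') (lt_nx : (n < theta x)%N) (lt_nx' : (n < theta x')%N)
  (xn : (xv x n = h%:Z)%R).

Lemma agree_up_step : (xv x n.+1 = h%:Z - 1)%R -> (xv x' n.+1 = h%:Z + 1)%R ->
  exists y, shift_step x y /\ agree_upto n.+1 y x'.
Proof.
move=> xn1 x'n1; have x'n : (xv x' n = h%:Z)%R by rewrite -agr.
have h_gt0 : (0 < h)%N by have := xv_ge0 n.+1 ex; lia.
have [m /andP[le_nm lt_mx] /up_stepP[xm xm1]] :=
  up_step_after (ltnW lt_nx) (ltnW lt_nx') agr (lev h) (leqnn n) lt_nx'
    (introT (up_stepP _ _ _) (conj x'n x'n1)).
have lt_nm : (n < m)%N.
  by rewrite ltn_neqAle le_nm andbT; apply/negP => /eqP nm; move: xm1; rewrite -nm xn1; lia.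
have h1_gt0 : (0 < h%:Z + 1)%R by lia.
have [e [/andP[le_m1e lt_ex] _ xe1 above]] := pos_exc_crossing_down ex lt_mx h1_gt0 xm1.
exists (shift m e.+1 n x); split.
  exists m, e.+1, n, (h%:Z)%R; split => //; split; first by split; lia.
  - by have := xv_le_height x m.+1; lia.
  - by split; lia.
  - by move=> l /andP[lt_ml lt_le]; have := above l; lia.
  - lia.
apply: agree_uptoS => [i le_in | ].
  by rewrite xv_shift_prefix ?agr //; lia.
by rewrite xv_shift_backward ?subSnn ?addn1 ?xm1 ?x'n1 //; lia.
Qed.

Lemma postpone_excursion j : (xv x n.+1 = h%:Z + 1)%R -> (xv x' n.+1 = h%:Z - 1)%R ->
  (n <= j)%N -> (xv x j = h%:Z)%R -> (xv x j.+1 = h%:Z - 1)%R ->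
  exists y j', [/\ shift_step x y, agree_upto n y x', (n <= j' < j)%N,
    (xv y j' = h%:Z)%R & (xv y j'.+1 = h%:Z - 1)%R].
Proof.
move=> xn1 x'n1 le_nj xj xj1; have x'n : (xv x' n = h%:Z)%R by rewrite -agr.
have h_gt0 : (0 < h)%N by have := xv_ge0 n.+1 ex'; lia.
have [h_pos h1_pos] : (0 < h%:Z)%R /\ (0 < h%:Z + 1)%R by split; lia.
have [j0 [/andP[le_nj0 _] xj0 xj01 above_h]] := pos_exc_crossing_down ex (ltnW lt_nx) h_pos xn.
have le_j0j : (j0 <= j)%N by rewrite leqNgt; apply/negP => lt_jj0; have := above_h j.+1; lia.
have [e [/andP[le_n1e _] _ xe1 above_h1]] := pos_exc_crossing_down ex lt_nx h1_pos xn1.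
have j0_neq_n : j0 != n by apply/eqP => j0n; move: xj01; rewrite j0n xn1; lia.
have lt_ej0 : (e < j0)%N by rewrite ltnNge; apply/negP => le_j0e; have := above_h1 j0; lia.
have [m /andP[le_nm lt_mx'] /up_stepP[x'm x'm1]] :=
  up_step_after (ltnW lt_nx') (ltnW lt_nx) (agree_upto_sym agr) (esym (lev h)) (leqnn n)
    lt_nx (introT (up_stepP _ _ _) (conj xn xn1)).
have lt_nm : (n < m)%N.
  by rewrite ltn_neqAle le_nm andbT; apply/negP => /eqP nm; move: x'm1; rewrite -nm x'n1; lia.
have x'n1_lt : (xv x' n.+1 < h%:Z)%R by rewrite x'n1; lia.
have x'm_ge : (h%:Z <= xv x' m)%R by rewrite x'm.
have [q' [/andP[le_n1q' lt_q'm] x'q' x'q'1]] :=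
  crossing_up (pos_exc_unit_steps ex' (ltnW lt_mx')) lt_nm x'n1_lt x'm_ge.
have up_x'q' : up_step x' h.-1 q' by apply/up_stepP; lia.
have [q /andP[le_nq lt_qx] /up_stepP[xq xq1]] :=
  up_step_after (ltnW lt_nx) (ltnW lt_nx') agr (lev h.-1) (ltnW le_n1q')
    (ltn_trans lt_q'm lt_mx') up_x'q'.
have lt_j0q : (j0 < q)%N by rewrite ltnNge; apply/negP => le_qj0; have := above_h q; lia.
exists (shift n e.+1 q.+1 x), (n + (j0 - e.+1))%N; split.
- exists n, e.+1, q.+1, (h%:Z)%R; split => //; split; first by split; lia.
  + by have := xv_le_height x n.+1; lia.
  + by split; lia.
  + by move=> l /andP[lt_nl lt_le]; have := above_h1 l; lia.
  + lia.
- move=> i le_in; case: (ltnP i n) => [lt_in | le_ni].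
    by rewrite xv_shift_prefix ?agr //; lia.
  have -> : i = n by lia.
  by rewrite xv_shift_forward ?subnn ?addn0 ?xe1 ?x'n //; lia.
- lia.
- by rewrite xv_shift_forward -?xj0; [congr (xv x _) | ..]; lia.
- by rewrite xv_shift_forward -?xj01; [congr (xv x _) | ..]; lia.
Qed.

End AgreementStep.

Lemma agree_down_step x x' n h j : pos_exc x -> pos_exc x' -> same_levels x x' ->
  agree_upto n x x' -> (n < theta x)%N -> (n < theta x')%N -> (xv x n = h%:Z)%R ->
  (xv x' n.+1 = h%:Z - 1)%R -> (n <= j)%N -> (xv x j = h%:Z)%R -> (xv x j.+1 = h%:Z - 1)%R ->
  exists y, shift_reachable x y /\ agree_upto n.+1 y x'.
Proof.
move=> + ex' + + + lt_nx' + x'n1; elim/ltn_ind: j x => j IHj x ex lev agr lt_nx xn le_nj xj xj1.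
have [xn1 | xn1] := pos_exc_step ex lt_nx; rewrite xn in xn1.
  have [y [j' [xy agy /andP[le_nj' lt_j'j] yj' yj'1]]] :=
    postpone_excursion ex ex' lev agr lt_nx lt_nx' xn xn1 x'n1 le_nj xj xj1.
  have [ey thy levy] := shift_step_inv ex xy.
  have levy' : same_levels y x' by move=> k; rewrite levy lev.
  have lt_ny : (n < theta y)%N by rewrite thy.
  have yn : (xv y n = h%:Z)%R by rewrite agy // -agr.
  have [z [yz agz]] := IHj j' lt_j'j y ey levy' agy lt_ny yn le_nj' yj' yj'1.
  by exists z; split=> //; apply: shift_reachable_trans (shift_step_reachable xy) yz.
by exists x; split; [apply: shift_reachable_refl | apply: agree_uptoS => //; rewrite xn1 x'n1].
Qed.

Lemma agree_next x x' n : pos_exc x -> pos_exc x' -> same_levels x x' ->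
  agree_upto n x x' -> (n < theta x)%N -> (n < theta x')%N ->
  exists y, shift_reachable x y /\ agree_upto n.+1 y x'.
Proof.
move=> ex ex' lev agr lt_nx lt_nx'.
have [h xn] : exists h : nat, (xv x n = h%:Z)%R.
  by exists `|xv x n|%N; rewrite gez0_abs ?xv_ge0.
have x'n : (xv x' n = h%:Z)%R by rewrite -agr.
have [x_eq | x_neq] := eqVneq (xv x n.+1) (xv x' n.+1).
  by exists x; split; [apply: shift_reachable_refl | apply: agree_uptoS].
have [xn1 | xn1] := pos_exc_step ex lt_nx; have [x'n1 | x'n1] := pos_exc_step ex' lt_nx';
  rewrite ?xn ?x'n in xn1 x'n1; rewrite ?xn1 ?x'n1 ?eqxx in x_neq => //.
- have h_pos : (0 < h%:Z)%R by have := xv_ge0 n.+1 ex'; lia.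
  have [j [/andP[le_nj _] xj xj1 _]] := pos_exc_crossing_down ex (ltnW lt_nx) h_pos xn.
  exact: agree_down_step ex ex' lev agr lt_nx lt_nx' xn x'n1 le_nj xj xj1.
have [y [xy agy]] := agree_up_step ex lev agr lt_nx lt_nx' xn xn1 x'n1.
by exists y; split=> //; apply: shift_step_reachable.
Qed.

Lemma shift_reachable_of_agree x x' n : pos_exc x -> pos_exc x' -> same_levels x x' ->
  agree_upto n x x' -> shift_reachable x x'.
Proof.
move=> + ex'; have [d] := ubnP (theta x - n).
elim: d => // d IHd in x n *; move=> lt_d ex lev agr.
case: (leqP (theta x) n) => [le_xn | lt_nx].
  by rewrite (agree_upto_eq ex ex' lev agr le_xn); apply: shift_reachable_refl.
case: (leqP (theta x') n) => [le_x'n | lt_nx'].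
  rewrite -(agree_upto_eq ex' ex _ (agree_upto_sym agr) le_x'n) => [|h].
    exact: shift_reachable_refl.
  by rewrite lev.
have [y [xy agy]] := agree_next ex ex' lev agr lt_nx lt_nx'.
have [ey thy levy] := shift_reachable_inv ex xy.
apply: shift_reachable_trans xy (IHd y n.+1 _ ey _ agy).
  by rewrite thy; lia.
by move=> h; rewrite levy lev.
Qed.

Theorem proposition3 (x : lpath) : pos_exc x ->
  forall x' : lpath,
    (pos_exc x' /\ (forall h : nat, level_number x' h = level_number x h))
    <-> shift_reachable x x'.
Proof.
move=> ex x'; split=> [[ex' lev] | reach].
  apply: (shift_reachable_of_agree (n := 0) ex ex') => [h | i].
    by rewrite lev.
  by rewrite leqn0 => /eqP ->; case: ex => _ -> _ _ _; case: ex' => _ -> _ _ _.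
by have [ex' _ lev] := shift_reachable_inv ex reach.
Qed.
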